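(* Let $G=(V,E)$ be an undirected graph with positive edge weights, and let $p,v\in V$ be distinct. If a minimum $p,v$-cut $S$ with $v\in S$ (and $p\notin S$) satisfies $|E(\{v\},V\setminus S)|>0.6\deg(v)$, then for all $v'\in S\setminus\{v\}$ we have $\lambda_{p,v'}\le 0.8\,\lambda_{p,v}$.
   Context: $|E(A,B)|$ is the total weight of edges between node sets $A$ and $B$; $\deg(u)$ is the total weight of edges incident to $u$; $\lambda_{x,y}$ denotes the value (total weight of crossing edges) of a minimum $x,y$-cut in $G$. *)

From HB Require Import structures.
From mathcomp Require Import all_boot all_order all_algebra.
Set Implicit Arguments. Unset Strict Implicit. Unset Printing Implicit Defensive.
Import Order.TTheory GRing.Theory Num.Theory.
Local Open Scope ring_scope.

(* A weighted undirected graph on a finite vertex set V is given by a weight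
   function w : V -> V -> R; the edge {x,y} is present iff w x y > 0
   (its weight is then w x y). *)
Definition wgraph (R : numDomainType) (V : finType) (w : V -> V -> R) : Prop :=
  (forall x y, w x y = w y x) /\ (forall x, w x x = 0) /\ (forall x y, 0 <= w x y).

Definition Ew (R : numDomainType) (V : finType) (w : V -> V -> R)
  (A B : {set V}) : R := \sum_(x in A) \sum_(y in B) w x y.

Definition degw (R : numDomainType) (V : finType) (w : V -> V -> R) (u : V) : R :=
  \sum_(y : V) w u y.

Definition cutval (R : numDomainType) (V : finType) (w : V -> V -> R)
  (S : {set V}) : R := Ew w S (~: S).

Definition is_cut (V : finType) (x y : V) (S : {set V}) : bool :=
  (y \in S) && (x \notin S).

Definition is_min_cut (R : realDomainType) (V : finType) (w : V -> V -> R)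
  (x y : V) (S : {set V}) : Prop :=
  is_cut x y S /\ forall T : {set V}, is_cut x y T -> cutval w S <= cutval w T.

(* lambda_{x,y}: value of a minimum x,y-cut (meaningful for x != y, where
   [set y] is itself an x,y-cut, so the default is never below the minimum) *)
Definition lambda (R : realDomainType) (V : finType) (w : V -> V -> R)
  (x y : V) : R :=
  \big[Num.min/cutval w [set y]]_(S : {set V} | is_cut x y S) cutval w S.

From HB Require Import structures.
From mathcomp Require Import all_boot all_order all_algebra.
From mathcomp Require Import ring lra.
Import Order.TTheory GRing.Theory Num.Theory.
Local Open Scope ring_scope.

(* Moving v out of the minimum cut S trades its edges leaving S, of weight
   a = |E({v}, V \ S)|, for its edges inside S, of weight deg(v) - a; hence
   cut(S \ {v}) = cut(S) + deg(v) - 2a.  As {v} is itself a p,v-cut,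
   cut(S) <= deg(v), so a > 3/5 deg(v) gives
   cut(S \ {v}) < cut(S) - deg(v)/5 <= 4/5 cut(S) = 4/5 lambda_{p,v},
   and S \ {v} is a p,v'-cut for every v' in S \ {v}. *)

Section EdgeWeights.

Context {R : numDomainType} {V : finType} {w : V -> V -> R}.
Implicit Types (A B S : {set V}) (x y v : V).

Lemma Ew_set1 x y : Ew w [set x] [set y] = w x y.
Proof. by rewrite /Ew !big_set1. Qed.

Lemma Ew_setD1l [x A B] : x \in A -> Ew w A B = Ew w [set x] B + Ew w (A :\ x) B.
Proof. by move=> xA; rewrite /Ew (big_setD1 x xA) big_set1. Qed.

Lemma Ew_setD1r [y A B] : y \in B -> Ew w A B = Ew w A [set y] + Ew w A (B :\ y).
Proof.
move=> yB; rewrite /Ew -big_split; apply: eq_bigr => x _.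
by rewrite (big_setD1 y yB) big_set1.
Qed.

Lemma Ew_setTr A B : Ew w A [set: V] = Ew w A B + Ew w A (~: B).
Proof.
rewrite /Ew -big_split; apply: eq_bigr => x _.
by rewrite (big_setID B) setTI setTD.
Qed.

Lemma degwE x : degw w x = Ew w [set x] [set: V].
Proof. by rewrite /Ew big_set1; apply: eq_bigl => y; rewrite inE. Qed.

Hypothesis w_sym : forall x y, w x y = w y x.

Lemma Ew_sym A B : Ew w A B = Ew w B A.
Proof. by rewrite /Ew exchange_big; apply: eq_bigr => y _; apply: eq_bigr. Qed.

Hypothesis w_loop0 : forall x, w x x = 0.

Lemma cutval_set1 v : cutval w [set v] = degw w v.
Proof. by rewrite degwE (Ew_setTr _ [set v]) Ew_set1 w_loop0 add0r. Qed.

Lemma cutval_setD1 [v S] : v \in S ->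
  cutval w (S :\ v) = cutval w S + degw w v - 2 * Ew w [set v] (~: S).
Proof.
move=> vS; have vCSv : v \in ~: (S :\ v) by rewrite !inE eqxx.
have CSvE : ~: (S :\ v) :\ v = ~: S.
  by apply/setP => y; rewrite !inE; case: eqP => [->|] /=; rewrite ?vS.
rewrite /cutval (Ew_setD1r vCSv) CSvE Ew_sym (Ew_setD1l vS).
rewrite degwE (Ew_setTr _ S) (Ew_setD1r vS) Ew_set1 w_loop0 add0r.
ring.
Qed.

End EdgeWeights.

Section MinCuts.

Context {R : realDomainType} {V : finType} {w : V -> V -> R}.

Lemma is_cut_set1 [x y : V] : x != y -> is_cut x y [set y].
Proof. by rewrite /is_cut !inE eqxx. Qed.

Lemma lambda_le_cutval [x y : V] [T : {set V}] :
  is_cut x y T -> lambda w x y <= cutval w T.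
Proof. exact: bigmin_le_cond. Qed.

Lemma lambda_min_cut [x y : V] [S : {set V}] :
  is_min_cut w x y S -> lambda w x y = cutval w S.
Proof.
move=> [cutS Smin]; apply/le_anti/andP; split; first exact: lambda_le_cutval.
have xy : x != y by case/andP: cutS => yS; apply: contraNneq => ->.
by apply: le_bigmin => [|T /Smin //]; apply/Smin/is_cut_set1.
Qed.

End MinCuts.

Theorem lemma4p4 (R : realFieldType) (V : finType) (w : V -> V -> R)
  (p v : V) (S : {set V}) :
  wgraph w -> p != v ->
  is_min_cut w p v S ->
  Ew w [set v] (~: S) > (3 / 5) * degw w v ->
  forall v' : V, v' \in S :\ v -> lambda w p v' <= (4 / 5) * lambda w p v.
Proof.
move=> [w_sym [w_loop0 _]] pv Smin big_out v' v'Sv.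
have [/andP [vS pNS] _] := Smin.
have cutSv : is_cut p v' (S :\ v) by rewrite /is_cut v'Sv !inE (negbTE pNS) andbF.
have S_le_deg : cutval w S <= degw w v.
  by rewrite -(cutval_set1 w_loop0); exact: Smin.2 _ (is_cut_set1 pv).
rewrite (lambda_min_cut Smin); apply: le_trans (lambda_le_cutval cutSv) _.
rewrite (cutval_setD1 w_sym w_loop0 vS).
lra.
Qed.
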